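(* Let $(x_0,x_1)$ be a state with $0\leq x_0\leq 1$ for which the character $ch(x_0,x_1)$ is defined, and let $q\geq 0$ be an integer with $q\leq ch(x_0,x_1)$. Then Paul has a winning strategy for the $q$-round pathological liar game with $1$ lie and initial state $(x_0,x_1)$.
   Context: Pathological liar game with $1$ lie: a state is a pair $(x_0,x_1)$ of nonnegative integers. In each round Paul chooses a legal question $(a_0,a_1)$ with integers $0\leq a_i\leq x_i$, and Carole answers Y or N; the new state is $(a_0,\,a_1+x_0-a_0)$ after Y, or $(x_0-a_0,\,x_1-a_1+a_0)$ after N. Paul wins the $q$-round game iff after $q$ rounds $x_0+x_1\geq 1$. Weight: $wt_q(x_0,x_1)=(q+1)x_0+x_1$. The character $ch(x_0,x_1)$ is the maximum integer $q\geq 0$ such that $wt_q(x_0,x_1)\geq 2^q$. *)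

From mathcomp Require Import all_boot.
Set Implicit Arguments. Unset Strict Implicit. Unset Printing Implicit Defensive.

Definition ans_Y (x0 x1 a0 a1 : nat) : nat * nat := (a0, a1 + (x0 - a0)).
Definition ans_N (x0 x1 a0 a1 : nat) : nat * nat := (x0 - a0, x1 - a1 + a0).

Fixpoint paul_wins (q x0 x1 : nat) {struct q} : Prop :=
  match q with
  | 0 => 1 <= x0 + x1
  | q'.+1 =>
      exists a0 a1, [/\ a0 <= x0, a1 <= x1,
        paul_wins q' (ans_Y x0 x1 a0 a1).1 (ans_Y x0 x1 a0 a1).2 &
        paul_wins q' (ans_N x0 x1 a0 a1).1 (ans_N x0 x1 a0 a1).2]
  end.

Definition wt (q x0 x1 : nat) : nat := q.+1 * x0 + x1.

Definition is_ch (x0 x1 c : nat) : Prop :=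
  2 ^ c <= wt c x0 x1 /\ (forall q, 2 ^ q <= wt q x0 x1 -> q <= c).

From mathcomp Require Import all_boot.
From mathcomp Require Import zify.

Set Implicit Arguments.
Unset Strict Implicit.
Unset Printing Implicit Defensive.

(* Berlekamp's conservation of weight: the weights of the two answers to a
   legal question add up to the weight of the current state, so Paul can win
   whenever he can keep the weight of both answers at least [2 ^ q] with [q]
   rounds left.  With at most one lie-free candidate this is always possible:
   from [(0, x1)] he halves [x1], from [(1, x1)] he makes the answer Y worth
   exactly [2 ^ q].  The condition [2 ^ q <= wt q x0 x1] is inherited by every
   [q <= ch x0 x1] because lowering [q] by one lowers the weight by only [x0]
   but halves [2 ^ q]. *)

Lemma wtS q x0 x1 : wt q.+1 x0 x1 = wt q x0 x1 + x0.
Proof. by rewrite /wt mulSn [x0 + _]addnC addnAC. Qed.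

Lemma wt_ans_YN q x0 x1 a0 a1 : a0 <= x0 -> a1 <= x1 ->
  wt q (ans_Y x0 x1 a0 a1).1 (ans_Y x0 x1 a0 a1).2
    + wt q (ans_N x0 x1 a0 a1).1 (ans_N x0 x1 a0 a1).2 = wt q.+1 x0 x1.
Proof.
move=> a0_le a1_le; rewrite /wt /= mulnBr.
by have := leq_mul (leqnn q.+1) a0_le; lia.
Qed.

Lemma pow2_le_wt_pred q x0 x1 :
  x0 <= 2 ^ q -> 2 ^ q.+1 <= wt q.+1 x0 x1 -> 2 ^ q <= wt q x0 x1.
Proof. by rewrite wtS expnS; lia. Qed.

Lemma pow2_le_wt_le q c x0 x1 : x0 <= 1 -> q <= c ->
  2 ^ c <= wt c x0 x1 -> 2 ^ q <= wt q x0 x1.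
Proof.
move=> x0_le1; elim: c => [|c IHc]; first by rewrite leqn0 => /eqP->.
rewrite leq_eqVlt ltnS => /predU1P[-> //|q_le_c] wt_c.
apply: (IHc q_le_c); apply: pow2_le_wt_pred wt_c.
by apply: leq_trans x0_le1 _; rewrite expn_gt0.
Qed.

Lemma paul_wins_of_wt q x0 x1 :
  x0 <= 1 -> 2 ^ q <= wt q x0 x1 -> paul_wins q x0 x1.
Proof.
elim: q x0 x1 => [|q IHq] x0 x1 x0_le1 wt_ge.
  by move: wt_ge; rewrite /wt mul1n.
suff [a0 [a1 [a0_le a1_le wt_Y_ge wt_Y_le]]] : exists a0 a1,
    [/\ a0 <= x0, a1 <= x1, 2 ^ q <= wt q a0 (a1 + (x0 - a0))
       & wt q a0 (a1 + (x0 - a0)) + 2 ^ q <= wt q.+1 x0 x1].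
  have := wt_ans_YN q a0_le a1_le; rewrite /ans_Y /ans_N /= => split_wt.
  by exists a0, a1; split => //; apply: IHq; lia.
have q_lt_pow := ltn_expl q (ltnSn 1).
move: wt_ge; rewrite expnS /wt; case: x0 x0_le1 => [|[|//]] _ wt_ge.
- by exists 0, (x1 %/ 2); split => //; [exact: leq_div | lia | lia].
- by exists 1, (2 ^ q - q.+1); split => //; lia.
Qed.

Theorem lemma12 (x0 x1 c q : nat) :
  x0 <= 1 -> is_ch x0 x1 c -> q <= c -> paul_wins q x0 x1.
Proof.
move=> x0_le1 [pow_le_wt _] q_le_c.
exact: paul_wins_of_wt x0_le1 (pow2_le_wt_le x0_le1 q_le_c pow_le_wt).
Qed.
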